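(* Let $G$ be a graph with $m=|E(G)|$ edges, and let $(G',L,\alpha,\beta)$ be constructed from $G$ as described in the context. If $G$ is 3-colorable, then there exists an $L$-recoloring sequence for $G'$ from $\alpha$ to $\beta$ of length at most $c\cdot(m+1)$, where $c$ is an absolute constant.
   Context: A color list assignment $L$ gives each vertex a list $L(v)\subseteq[4]=\{1,2,3,4\}$. An $L$-coloring is a proper coloring $\gamma$ with $\gamma(v)\in L(v)$ for all $v$. $\mathcal{C}(G,L)$ is the graph on $L$-colorings, two adjacent iff they differ on exactly one vertex; an $L$-recoloring sequence of length $m$ is a sequence $\gamma_0,\ldots,\gamma_m$ of $L$-colorings with consecutive ones equal or adjacent in $\mathcal{C}(G,L)$. $(a,b)$-forbidding path: for $a,b\in[4]$, a path $P$ with lists $L(x)\subseteq[4]$ and end vertices $u,v$ is $(a,b)$-forbidding from $u$ to $v$ if (i) for all $x\in L(u)$, $y\in L(v)$, there is an $L$-coloring $\gamma$ of $P$ with $\gamma(u)=x,\gamma(v)=y$ iff $x\ne a$ or $y\ne b$ (such $(x,y)$ are called admissible); and (ii) for any $L$-coloring $\gamma$ of $P$ and any admissible $(x,y)$ with $x=\gamma(u)$ or $y=\gamma(v)$, there is an $L$-recoloring sequence of $P$ from $\gamma$ to an $L$-coloring $\delta$ with $\delta(u)=x,\delta(v)=y$ in which each internal vertex is recolored at most once and $u,v$ are not recolored until the last step. Such paths of length six exist whenever $L(u),L(v)\ne[4]$, $a\in L(u)$, $b\in L(v)$. Construction of $G'$: start with $V(G)$ (no edges among these), each $u\in V(G)$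 with $L(u)=\{1,2,3\}$, $\alpha(u)=1$. For every edge $uv\in E(G)$ (with a fixed orientation $u,v$), add new vertices $x_{uv},y_{uv},z_{uv}$ with $\alpha$-value $4$ each and $L(x_{uv})=\{1,2,4\}$, $L(y_{uv})=\{3,4\}$, $L(z_{uv})=\{1,2,4\}$; add edges $ux_{uv}$, $uy_{uv}$; and add (each with its own new internal vertices, each of length six) a $(1,2)$-forbidding and a $(3,1)$-forbidding path from $u$ to $x_{uv}$, a $(2,3)$-forbidding path from $u$ to $y_{uv}$, a $(2,1)$-forbidding and a $(3,2)$-forbidding path from $v$ to $x_{uv}$, a $(1,3)$-forbidding path from $v$ to $y_{uv}$, a $(4,1)$-forbidding path from $x_{uv}$ to $z_{uv}$, and a $(4,2)$-forbidding path from $y_{uv}$ to $z_{uv}$. Let $Z=\{z_{uv}\mid uv\in E(G)\}$. Add vertices $a,b,c,d$ with $\alpha(a)=1,\alpha(b)=2,\alpha(c)=3,\alpha(d)=4$, $L(a)=\{1,2,3\}$, $L(b)=\{1,2\}$, $L(c)=\{3,4\}$, $L(d)=\{4\}$, all edges among $a,b,c,d$ except $cd$, and edges from every vertex of $Z$ to $c$. Extend $\alpha$ arbitrarily to an $L$-coloring of all internal vertices of the forbidding paths (possible since the end colors are admissible). Set $\beta(w)=\alpha(w)$ for all $w\ne a,b$, $\beta(a)=2$, $\beta(b)=1$. *)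

From mathcomp Require Import all_boot.
Set Implicit Arguments.
Unset Strict Implicit.
Unset Printing Implicit Defensive.

(* Colors are natural numbers; lists are sequences of naturals (subsets of [4]). *)

Definition is_Lcol (V : Type) (adj : V -> V -> Prop) (L : V -> seq nat)
  (g : V -> nat) : Prop :=
  (forall x, g x \in L x) /\ (forall x y, adj x y -> g x <> g y).

Definition step_ok (V : Type) (f g : V -> nat) : Prop :=
  (forall x, f x = g x) \/
  (exists w, f w <> g w /\ forall x, x <> w -> f x = g x).

Definition recol_seq (V : Type) (adj : V -> V -> Prop) (L : V -> seq nat)
  (s : nat -> V -> nat) (m : nat) : Prop :=
  (forall i, i <= m -> is_Lcol adj L (s i)) /\
  (forall i, i < m -> step_ok (s i) (s i.+1)).

Definition padj (i j : 'I_7) : Prop :=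
  nat_of_ord j = (nat_of_ord i).+1 \/ nat_of_ord i = (nat_of_ord j).+1.

Definition pu : 'I_7 := ord0.
Definition pv : 'I_7 := ord_max.

Definition forbidding (Lp : 'I_7 -> seq nat) (a b : nat) : Prop :=
  (forall x y, x \in Lp pu -> y \in Lp pv ->
     ((exists g, is_Lcol padj Lp g /\ g pu = x /\ g pv = y) <-> (x <> a \/ y <> b)))
  /\
  (forall (g : 'I_7 -> nat) (x y : nat),
     is_Lcol padj Lp g -> x \in Lp pu -> y \in Lp pv -> (x <> a \/ y <> b) ->
     (x = g pu \/ y = g pv) ->
     exists (m : nat) (s : nat -> 'I_7 -> nat),
       [/\ recol_seq padj Lp s m,
           (forall w, s 0 w = g w),
           s m pu = x /\ s m pv = y,
           (forall i, i < m -> s i pu = g pu /\ s i pv = g pv) &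
           (forall w : 'I_7, w <> pu -> w <> pv ->
              forall i j, i < j -> j < m ->
                s i w <> s i.+1 w -> s j w <> s j.+1 w -> False)]).

(* A simple graph on 'I_n together with a fixed orientation o of its edges:
   uv is an edge of G iff o u v || o v u. *)
Definition edge_t (n : nat) (o : rel 'I_n) := {p : 'I_n * 'I_n | o p.1 p.2}.

Definition num_edges (n : nat) (o : rel 'I_n) : nat :=
  #|[pred p : 'I_n * 'I_n | o p.1 p.2]|.

Definition three_colorable (n : nat) (o : rel 'I_n) : Prop :=
  exists f : 'I_n -> 'I_3, forall u v, o u v || o v u -> f u != f v.

(* Path kinds k : 'I_8 for an oriented edge e = (u,v):
   0: (1,2) u->x   1: (3,1) u->x   2: (2,3) u->y   3: (2,1) v->x
   4: (3,2) v->x   5: (1,3) v->y   6: (4,1) x->z   7: (4,2) y->z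
   Internal vertices of each path: 'I_5. *)
Inductive vtx (n : nat) (o : rel 'I_n) : Type :=
| VOrig of 'I_n
| VX of edge_t o
| VY of edge_t o
| VZ of edge_t o
| VInt of edge_t o & 'I_8 & 'I_5
| VA | VB | VC | VD.
Arguments VOrig {n o}. Arguments VX {n o}. Arguments VY {n o}.
Arguments VZ {n o}. Arguments VInt {n o}.
Arguments VA {n o}. Arguments VB {n o}. Arguments VC {n o}. Arguments VD {n o}.

Definition pstart (n : nat) (o : rel 'I_n) (e : edge_t o) (k : 'I_8) : vtx o :=
  match nat_of_ord k with
  | 0 | 1 | 2 => VOrig (sval e).1
  | 3 | 4 | 5 => VOrig (sval e).2
  | 6 => VX e
  | _ => VY e
  end.

Definition pend (n : nat) (o : rel 'I_n) (e : edge_t o) (k : 'I_8) : vtx o :=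
  match nat_of_ord k with
  | 0 | 1 | 3 | 4 => VX e
  | 2 | 5 => VY e
  | _ => VZ e
  end.

Definition pa (k : 'I_8) : nat :=
  match nat_of_ord k with
  | 0 => 1 | 1 => 3 | 2 => 2 | 3 => 2 | 4 => 3 | 5 => 1 | _ => 4
  end.

Definition pb (k : 'I_8) : nat :=
  match nat_of_ord k with
  | 0 => 2 | 1 => 1 | 2 => 3 | 3 => 1 | 4 => 2 | 5 => 3 | 6 => 1 | _ => 2
  end.

Definition pathv (n : nat) (o : rel 'I_n) (e : edge_t o) (k : 'I_8) (i : 'I_7)
  : vtx o :=
  if nat_of_ord i == 0 then pstart e k
  else if nat_of_ord i == 6 then pend e k
  else VInt e k (inord (nat_of_ord i).-1).

Inductive adj0 (n : nat) (o : rel 'I_n) : vtx o -> vtx o -> Prop :=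
| adj_ux e : adj0 (VOrig (sval e).1) (VX e)
| adj_uy e : adj0 (VOrig (sval e).1) (VY e)
| adj_path e k (i j : 'I_7) :
    nat_of_ord j = (nat_of_ord i).+1 -> adj0 (pathv e k i) (pathv e k j)
| adj_zc e : adj0 (VZ e) VC
| adj_ab : adj0 VA VB
| adj_ac : adj0 VA VC
| adj_ad : adj0 VA VD
| adj_bc : adj0 VB VC
| adj_bd : adj0 VB VD.

Definition Gadj (n : nat) (o : rel 'I_n) (x y : vtx o) : Prop :=
  adj0 x y \/ adj0 y x.

Definition Glist (n : nat) (o : rel 'I_n)
  (Lint : edge_t o -> 'I_8 -> 'I_5 -> seq nat) (x : vtx o) : seq nat :=
  match x with
  | VOrig _ => [:: 1; 2; 3]
  | VX _ => [:: 1; 2; 4]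
  | VY _ => [:: 3; 4]
  | VZ _ => [:: 1; 2; 4]
  | VInt e k i => Lint e k i
  | VA => [:: 1; 2; 3]
  | VB => [:: 1; 2]
  | VC => [:: 3; 4]
  | VD => [:: 4]
  end.

Definition alpha_spec (n : nat) (o : rel 'I_n)
  (Lint : edge_t o -> 'I_8 -> 'I_5 -> seq nat) (al : vtx o -> nat) : Prop :=
  [/\ forall u, al (VOrig u) = 1,
      forall e, [/\ al (VX e) = 4, al (VY e) = 4 & al (VZ e) = 4],
      [/\ al VA = 1, al VB = 2, al VC = 3 & al VD = 4] &
      is_Lcol (@Gadj n o) (Glist Lint) al].

Definition beta_of (n : nat) (o : rel 'I_n) (al : vtx o -> nat) (x : vtx o) : nat :=
  match x with
  | VA => 2
  | VB => 1
  | _ => al x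
  end.

From HB Require Import structures.
From mathcomp Require Import all_boot zify.
From Stdlib Require Import FunctionalExtensionality Lia.
Set Implicit Arguments.
Unset Strict Implicit.
Unset Printing Implicit Defensive.

(* Fix a proper 3-coloring of G and let phi u be its color (plus one) at every
   non-isolated vertex u, and 1 at isolated ones.  Starting from alpha we
   recolor the skeleton of G' (everything except the internal path vertices)
   in three rounds: first every u to phi u, then x_uv and y_uv, then z_uv, the
   colors of the last three being determined by phi u.  Before a round, property
   (ii) of each forbidding path lets us rearrange its interior, in at most seven
   moves, so that it accepts the new end colors; the skeleton vertices of the
   round are then recolored one at a time.  A round costs O(m) moves.  After the
   third round no z_uv has color 4, so c can move to 4 and a, b can exchange the
   colors 1 and 2 in five moves.  Finally the three rounds are replayed backwards
   with the colors of a and b exchanged throughout, which ends in beta. *)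

Section Reconfiguration.
Variables (V : Type) (adj : V -> V -> Prop) (L : V -> seq nat).

Definition reach (P : (V -> nat) -> Prop) (k : nat) (a b : V -> nat) : Prop :=
  exists s : nat -> V -> nat,
    [/\ recol_seq adj L s k, s 0 = a, s k = b & forall i, i <= k -> P (s i)].

Lemma step_ok_sym (f g : V -> nat) : step_ok f g -> step_ok g f.
Proof.
case=> [H|[w [Hw H]]]; [left=> x; by rewrite H | right; exists w; split].
  by move=> E; apply: Hw.
by move=> x /H ->.
Qed.

Lemma reach_refl P a : is_Lcol adj L a -> P a -> reach P 0 a a.
Proof. by move=> La Pa; exists (fun _ => a); split=> //; split=> // i _; left. Qed.

Lemma reach1 P a b : is_Lcol adj L a -> is_Lcol adj L b -> P a -> P b ->
  step_ok a b -> reach P 1 a b.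
Proof.
move=> La Lb Pa Pb Sab; exists (fun i => if i == 0 then a else b); split=> //.
  by split; [case=> [|[|]] | case].
by case=> [|[|]].
Qed.

Lemma reach_weaken (P Q : (V -> nat) -> Prop) k a b :
  (forall c, P c -> Q c) -> reach P k a b -> reach Q k a b.
Proof. by move=> PQ [s [Hs s0 sk Ps]]; exists s; split=> // i /Ps; apply: PQ. Qed.

Lemma reach_Lcol P k a b : reach P k a b -> is_Lcol adj L b.
Proof. by case=> s [[Ls _] _ <- _]; apply: Ls. Qed.

Lemma reach_inv_end P k a b : reach P k a b -> P b.
Proof. by case=> s [_ _ <- Ps]; apply: Ps. Qed.

Lemma reach_trans P k1 k2 a b c :
  reach P k1 a b -> reach P k2 b c -> reach P (k1 + k2) a c.
Proof.
move=> [s1 [[L1 S1] A1 B1 P1]] [s2 [[L2 S2] A2 B2 P2]].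
pose s i := if i <= k1 then s1 i else s2 (i - k1).
have E i : k1 <= i -> s i = s2 (i - k1).
  move=> Hi; rewrite /s; case: leqP => // Hik.
  have -> : i = k1 by apply/eqP; rewrite eqn_leq Hik Hi.
  by rewrite subnn B1 A2.
exists s; split.
- split=> i Hi; case: (ltnP i k1) => Hik.
  + by rewrite /s (ltnW Hik); apply: L1; apply: ltnW.
  + by rewrite E //; apply: L2; rewrite leq_subLR.
  + by rewrite /s Hik (ltnW Hik); apply: S1.
  + by rewrite !E ?(leqW Hik) // subSn //; apply: S2; rewrite ltn_subLR.
- by rewrite /s leq0n.
- by rewrite E ?leq_addr // addKn.
- move=> i Hi; case: (leqP i k1) => Hik; first by rewrite /s Hik; apply: P1.
  by rewrite E ?(ltnW Hik) //; apply: P2; rewrite leq_subLR.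
Qed.

Lemma reach_leq P k k' a b : k <= k' -> reach P k a b -> reach P k' a b.
Proof.
move=> Hk [s [[L1 S1] A1 B1 P1]]; exists (fun i => s (minn i k)); split.
- split=> [i _|i Hi]; first by apply: L1; apply: geq_minr.
  case: (ltnP i k) => Hik.
    by rewrite (minn_idPl Hik); apply: S1.
  by rewrite (minn_idPr (leqW Hik)); left.
- by rewrite min0n.
- by rewrite (minn_idPr Hk).
- by move=> i _; apply: P1; apply: geq_minr.
Qed.

Lemma reach_sym P k a b : reach P k a b -> reach P k b a.
Proof.
move=> [s [[L1 S1] A1 B1 P1]]; exists (fun i => s (k - i)); split.
- split=> [i _|i Hi]; first by apply: L1; apply: leq_subr.
  rewrite -(subnSK Hi); apply: step_ok_sym; apply: S1.
  by rewrite subnSK // leq_subr.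
- by rewrite subn0.
- by rewrite subnn.
- by move=> i _; apply: P1; apply: leq_subr.
Qed.

Lemma Lcol_mix (a b : V -> nat) (p : pred V) :
  is_Lcol adj L a -> is_Lcol adj L b ->
  (forall x y, adj x y -> a x = b x \/ a y = b y) ->
  is_Lcol adj L (fun x => if p x then b x else a x).
Proof.
move=> [La Pa] [Lb Pb] Hab; split=> [x|x y Hxy]; first by case: (p x).
case: (p x); case: (p y); [exact: Pb| | |exact: Pa].
- by case: (Hab _ _ Hxy) => [<-|->]; [apply: Pa|apply: Pb].
- by case: (Hab _ _ Hxy) => [->|<-]; [apply: Pb|apply: Pa].
Qed.

End Reconfiguration.

Lemma reach_map (V W : Type) (adjV : V -> V -> Prop) (LV : V -> seq nat)
    (adjW : W -> W -> Prop) (LW : W -> seq nat)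
    (P : (V -> nat) -> Prop) (Q : (W -> nat) -> Prop)
    (F : (V -> nat) -> W -> nat) k a b :
  (forall c, P c -> is_Lcol adjV LV c -> is_Lcol adjW LW (F c) /\ Q (F c)) ->
  (forall c d, P c -> P d -> step_ok c d -> step_ok (F c) (F d)) ->
  reach adjV LV P k a b -> reach adjW LW Q k (F a) (F b).
Proof.
move=> HF HS [s [[L1 S1] A1 B1 P1]]; exists (fun i => F (s i)); split.
- split=> [i Hi|i Hi]; first by case: (HF _ (P1 _ Hi) (L1 _ Hi)).
  by apply: HS; [apply: P1; apply: ltnW | apply: P1 | apply: S1].
- by rewrite A1.
- by rewrite B1.
- by move=> i Hi; case: (HF _ (P1 _ Hi) (L1 _ Hi)).
Qed.

(* A sequence recoloring each vertex at most once visits at most #|V| + 1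
   distinct colorings: drop the steps that change nothing. *)
Lemma reach_recolor_once (V : finType) (adj : V -> V -> Prop) L P
    (s : nat -> V -> nat) M :
  recol_seq adj L s M -> (forall i, i <= M -> P (s i)) ->
  (forall i j w, i < j -> j < M -> s i w <> s i.+1 w -> s j w <> s j.+1 w -> False) ->
  reach adj L P #|V| (s 0) (s M).
Proof.
move=> [L1 S1] P1 once.
pose changed N := [set w | has (fun i => s i w != s i.+1 w) (iota 0 N)].
suff H N : N <= M -> reach adj L P #|changed N| (s 0) (s N).
  by apply: reach_leq (H M (leqnn M)); apply: max_card.
elim: N => [|N IH] HN.
  have -> : changed 0 = set0 by apply/setP=> w; rewrite !inE.
  by rewrite cards0; apply: reach_refl; [apply: L1 | apply: P1].
have IH' := IH (ltnW HN).
case: (S1 N HN) => [Hid|[w [Hw Hneq]]].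
  have E : s N.+1 = s N by apply: functional_extensionality => x; rewrite Hid.
  suff -> : changed N.+1 = changed N by rewrite E.
  by apply/setP=> x; rewrite !inE -addn1 iotaD has_cat /= Hid eqxx !orbF.
have -> : changed N.+1 = w |: changed N.
  apply/setP=> x; rewrite !inE -addn1 iotaD has_cat /= orbF add0n.
  case: (eqVneq x w) => [->|Hx] /=; first by apply/orP; right; apply/eqP.
  suff -> : (s N x != s N.+1 x) = false by rewrite orbF.
  by apply/negbTE; rewrite negbK; apply/eqP; apply: Hneq; apply/eqP.
rewrite cardsU1.
have -> : w \notin changed N.
  rewrite inE; apply/negP => /hasP [i]; rewrite mem_iota add0n => /andP [_ Hi] /eqP.
  by move=> Hiw; apply: (once i N w).
rewrite add1n -addn1; apply: reach_trans IH' _; apply: reach1.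
- exact: L1 (ltnW HN).
- exact: L1.
- exact: P1 (ltnW HN).
- exact: P1.
- by right; exists w.
Qed.

(* Recolor the vertices of ws one at a time; this stays proper because on each
   edge at most one end changes. *)
Lemma reach_recolor_seq (V : eqType) (adj : V -> V -> Prop) L (ws : seq V) :
  forall a b, is_Lcol adj L a -> is_Lcol adj L b ->
  (forall w, w \notin ws -> a w = b w) ->
  (forall x y, adj x y -> a x = b x \/ a y = b y) ->
  reach adj L (fun c => forall w, w \notin ws -> c w = a w) (size ws) a b.
Proof.
elim: ws => [|w ws IH] a b La Lb Hout Hadj /=.
  have -> : b = a by apply: functional_extensionality => x; rewrite Hout.
  exact: reach_refl.
pose a1 x := if x == w then b x else a x.
have La1 : is_Lcol adj L a1 := Lcol_mix (pred1 w) La Lb Hadj.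
have R1 : reach adj L (fun c => forall v, v \notin w :: ws -> c v = a v) 1 a a1.
  apply: reach1 => //.
    by move=> v; rewrite /a1 in_cons => /norP [/negbTE -> _].
  case: (eqVneq (a w) (b w)) => [E|E]; [left|right].
    by move=> x; rewrite /a1; case: eqP => // ->.
  exists w; split; first by rewrite /a1 eqxx; apply/eqP.
  by move=> x /eqP /negbTE; rewrite /a1 => ->.
have R2 : reach adj L (fun c => forall v, v \notin ws -> c v = a1 v) (size ws) a1 b.
  apply: IH => // [v Hv|x y Hxy]; rewrite /a1.
    by case: eqP => // /eqP Hvw; apply: Hout; rewrite in_cons negb_or Hvw.
  by case: eqP => _; [left | case: eqP => _; [right | apply: Hadj]].
rewrite -add1n; apply: reach_trans R1 (reach_weaken _ R2).
move=> c Hc v; rewrite in_cons negb_or => /andP [Hvw Hv].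
by rewrite Hc // /a1 (negbTE Hvw).
Qed.

Lemma ord7_pu (i : 'I_7) : nat_of_ord i = 0 -> i = pu.
Proof. by move=> H; apply: val_inj. Qed.

Lemma ord7_pv (i : 'I_7) : nat_of_ord i = 6 -> i = pv.
Proof. by move=> H; apply: val_inj. Qed.

Definition set_ends (h : 'I_7 -> nat) (x y : nat) : 'I_7 -> nat := fun i =>
  if nat_of_ord i == 0 then x else if nat_of_ord i == 6 then y else h i.

Lemma set_ends_id h : set_ends h (h pu) (h pv) = h.
Proof.
apply: functional_extensionality => i; rewrite /set_ends.
by case: eqP => [/ord7_pu -> //|_]; case: eqP => [/ord7_pv -> //|_].
Qed.

Lemma set_ends_step h h' : step_ok h h' ->
  set_ends h (h' pu) (h' pv) = h \/ set_ends h (h' pu) (h' pv) = h'.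
Proof.
case=> [Hid|[w [_ Hw]]]; first by left; rewrite -!Hid set_ends_id.
have [Ew|Nw] := boolP ((w == pu) || (w == pv)).
  right; apply: functional_extensionality => i; rewrite /set_ends.
  case: eqP => [/ord7_pu -> //|/eqP H0]; case: eqP => [/ord7_pv -> //|/eqP H6].
  apply: Hw => Ei; move: H0 H6; rewrite Ei.
  by case/orP: Ew => /eqP ->.
have [Hu Hv] : h pu = h' pu /\ h pv = h' pv.
  by split; apply: Hw => E; move: Nw; rewrite -E eqxx ?orbT.
by left; rewrite -Hu -Hv set_ends_id.
Qed.

(* Property (ii) of a forbidding path, cut just before its last step: the
   interior is rearranged in at most seven moves with the ends fixed, after
   which the new end colors are compatible with it. *)
Lemma forbidding_prepare Lp a b g x y :
  forbidding Lp a b -> is_Lcol padj Lp g ->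
  x \in Lp pu -> y \in Lp pv -> (x <> a \/ y <> b) -> (x = g pu \/ y = g pv) ->
  exists2 h, reach padj Lp (fun c => c pu = g pu /\ c pv = g pv) 7 g h
           & is_Lcol padj Lp (set_ends h x y).
Proof.
move=> [_ Fii] Lg Hx Hy Had Hor.
have [m [s [[Ls Ss] Hs0 [Hxm Hym] Hend Honce]]] := Fii g x y Lg Hx Hy Had Hor.
have s0 : s 0 = g by apply: functional_extensionality.
have ends_fixed i : i <= m.-1 -> s i pu = g pu /\ s i pv = g pv.
  case: (posnP m) => [m0|m_gt0] Hi; last by apply: Hend; lia.
  by move: Hi; rewrite m0 leqn0 => /eqP ->; rewrite s0.
have R : reach padj Lp (fun c => c pu = g pu /\ c pv = g pv) #|'I_7| (s 0) (s m.-1).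
  apply: reach_recolor_once => //.
    by split=> i Hi; [apply: Ls | apply: Ss]; lia.
  move=> i j w Hij Hj Hi Hj'.
  have [Hiu Hiv] := ends_fixed i ltac:(lia).
  have [Hu Hv] := ends_fixed i.+1 ltac:(lia).
  case: (eqVneq w pu) => [Ew|Nu]; first by apply: Hi; rewrite Ew Hiu Hu.
  case: (eqVneq w pv) => [Ew|Nv]; first by apply: Hi; rewrite Ew Hiv Hv.
  by apply: (Honce w _ _ i j) => //; [apply/eqP | apply/eqP | lia].
exists (s m.-1); first by rewrite card_ord s0 in R.
have : step_ok (s m.-1) (s m).
  case: (posnP m) => [->|m_gt0]; first by left.
  by rewrite -{2}(prednK m_gt0); apply: Ss; lia.
by rewrite -Hxm -Hym; case/set_ends_step => ->; apply: Ls; rewrite ?leq_pred.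
Qed.

Definition vtx_eq_dec (n : nat) (o : rel 'I_n) (x y : vtx o) : {x = y} + {x <> y}.
Proof. decide equality; exact: eq_comparable. Defined.

HB.instance Definition _ (n : nat) (o : rel 'I_n) :=
  hasDecEq.Build (vtx o) (compareP (@vtx_eq_dec n o)).

Section Skeleton.
Variables (n : nat) (o : rel 'I_n) (Lint : edge_t o -> 'I_8 -> 'I_5 -> seq nat).
Implicit Types (e : edge_t o) (k : 'I_8) (c g T : vtx o -> nat).

Local Notation Lcol := (is_Lcol (@Gadj n o) (Glist Lint)).
Local Notation reachG := (reach (@Gadj n o) (Glist Lint)).

Definition inner (x : vtx o) : bool := if x is VInt _ _ _ then true else false.

Definition path_col c e k : 'I_7 -> nat := fun i => c (pathv e k i).
Definition path_list e k : 'I_7 -> seq nat := fun i => Glist Lint (pathv e k i).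

Definition same_skeleton g c : Prop := forall w, ~~ inner w -> c w = g w.

Lemma inner_pstart e k : inner (pstart e k) = false.
Proof. by rewrite /pstart; case: (nat_of_ord k) => [|[|[|[|[|[|[|?]]]]]]]. Qed.

Lemma inner_pend e k : inner (pend e k) = false.
Proof. by rewrite /pend; case: (nat_of_ord k) => [|[|[|[|[|[|[|?]]]]]]]. Qed.

Lemma pathv_inord e k (j : 'I_5) : pathv e k (inord j.+1) = VInt e k j.
Proof.
have Hj := ltn_ord j.
rewrite /pathv inordK; last by lia.
have -> : (j.+1 == 6) = false by apply/negbTE; rewrite neq_ltn ltnS Hj.
by rewrite /= inord_val.
Qed.

Lemma inner_pathv e k i :
  inner (pathv e k i) = (nat_of_ord i != 0) && (nat_of_ord i != 6).
Proof.
rewrite /pathv; case: eqP => _; first by rewrite inner_pstart.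
by case: eqP => _; rewrite ?inner_pend.
Qed.

Lemma pathv_abcd e k i :
  match pathv e k i with VA | VB | VC | VD => False | _ => True end.
Proof.
rewrite /pathv /pstart /pend.
by case: eqP => _; last case: eqP => _ //; case: (nat_of_ord k) => [|[|[|[|[|[|[|?]]]]]]].
Qed.

Definition skeleton_proper c : Prop :=
  [/\ forall x, ~~ inner x -> c x \in Glist Lint x,
      forall e, c (VOrig (sval e).1) <> c (VX e),
      forall e, c (VOrig (sval e).1) <> c (VY e),
      forall e, c (VZ e) <> c VC &
      [&& c VA != c VB, c VA != c VC, c VA != c VD, c VB != c VC & c VB != c VD]].

(* Every edge of G' joins two skeleton vertices or lies on a path. *)
Lemma Lcol_skeleton_paths c :
  Lcol c <-> skeleton_proper c /\ forall e k, is_Lcol padj (path_list e k) (path_col c e k).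
Proof.
split.
  move=> [HL HA]; have HA0 x y : adj0 x y -> c x <> c y by move=> H; apply: HA; left.
  split.
    split=> //; try by move=> e; apply: HA0; constructor.
    by rewrite !(introN eqP (HA0 _ _ _)) //; constructor.
  move=> e k; split=> [i|i j [H|H]]; first exact: HL.
    by apply: HA0; apply: adj_path.
  by move=> E; apply: (HA0 _ _ (adj_path e k H)).
move=> [[HL H1 H2 H3 H4] HP]; split.
  case=> [u|e|e|e|e k j| | | |]; try exact: HL.
  by rewrite -(pathv_inord e k j); case: (HP e k) => + _; apply.
have HA0 : forall x y, adj0 x y -> c x <> c y.
  move=> x y; case=> [e|e|e k i j Hij|e| | | | |] //;
    try by apply/eqP; case/and5P: H4.
  exact: (proj2 (HP e k) i j (or_introl Hij)).
by move=> x y [H|H] //; [apply: HA0 | move=> E; apply: (HA0 _ _ H)].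
Qed.

Lemma skeleton_proper_ext c c' : same_skeleton c c' -> skeleton_proper c -> skeleton_proper c'.
Proof.
move=> E [H0 H1 H2 H3 H4]; split; try by move=> e; rewrite !E.
- by move=> x Hx; rewrite E //; apply: H0.
- by rewrite !E.
Qed.

Definition with_path c e k (h : 'I_7 -> nat) : vtx o -> nat := fun x =>
  match x with
  | VInt e' k' j => if (e' == e) && (k' == k) then h (inord j.+1) else c x
  | _ => c x
  end.

Lemma with_path_skeleton c e k h : same_skeleton c (with_path c e k h).
Proof. by case. Qed.

Lemma inord_pred (i : 'I_7) : nat_of_ord i != 0 -> nat_of_ord i != 6 ->
  (inord (nat_of_ord (inord (nat_of_ord i).-1 : 'I_5)).+1 : 'I_7) = i.
Proof.
move=> H0 H6; have Hi := ltn_ord i.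
by rewrite inordK ?prednK ?inord_val //; lia.
Qed.

Lemma path_col_with_path c e k h : h pu = c (pstart e k) -> h pv = c (pend e k) ->
  path_col (with_path c e k h) e k = h.
Proof.
move=> Hu Hv; apply: functional_extensionality => i; rewrite /path_col /pathv.
case: eqP => [/ord7_pu ->|H0]; first by rewrite with_path_skeleton ?inner_pstart.
case: eqP => [/ord7_pv ->|H6]; first by rewrite with_path_skeleton ?inner_pend.
by rewrite /= !eqxx inord_pred //; apply/eqP.
Qed.

Lemma path_col_with_path_other c e k h e' k' : (e', k') != (e, k) ->
  path_col (with_path c e k h) e' k' = path_col c e' k'.
Proof.
move=> Hne; apply: functional_extensionality => i; rewrite /path_col /pathv.
case: eqP => _; first by rewrite with_path_skeleton ?inner_pstart.
case: eqP => _; first by rewrite with_path_skeleton ?inner_pend.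
by move: Hne; rewrite /= xpair_eqE => /negbTE ->.
Qed.

Lemma with_path_col c e k : with_path c e k (path_col c e k) = c.
Proof.
apply: functional_extensionality; case=> // e' k' j /=.
by case: andP => // [[/eqP -> /eqP ->]]; rewrite /path_col pathv_inord.
Qed.

Lemma Lcol_with_path c e k h : Lcol c ->
  is_Lcol padj (path_list e k) h -> h pu = c (pstart e k) -> h pv = c (pend e k) ->
  Lcol (with_path c e k h).
Proof.
move=> /Lcol_skeleton_paths [Hs Hp] Hh Hu Hv; apply/Lcol_skeleton_paths; split.
  exact: skeleton_proper_ext (with_path_skeleton c e k h) Hs.
move=> e' k'; case: (eqVneq (e', k') (e, k)) => [[-> ->]|Hne].
  by rewrite path_col_with_path.
by rewrite path_col_with_path_other.
Qed.

Lemma step_with_path c e k h h' :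
  h pu = c (pstart e k) -> h pv = c (pend e k) ->
  h' pu = c (pstart e k) -> h' pv = c (pend e k) ->
  step_ok h h' -> step_ok (with_path c e k h) (with_path c e k h').
Proof.
move=> Hu Hv Hu' Hv' [Hid|[w [Hw Hoth]]].
  by left; case=> //= e' k' j; case: ifP.
have W0 : nat_of_ord w != 0 by apply/eqP => /ord7_pu E; apply: Hw; rewrite E Hu Hu'.
have W6 : nat_of_ord w != 6 by apply/eqP => /ord7_pv E; apply: Hw; rewrite E Hv Hv'.
right; exists (VInt e k (inord (nat_of_ord w).-1)); split.
  by rewrite /= !eqxx inord_pred.
case=> //= e' k' j Hx; case: ifP => // /andP [/eqP E1 /eqP E2].
apply: Hoth => E; apply: Hx; rewrite E1 E2 -E.
have Hj := ltn_ord j.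
by congr VInt; apply: val_inj; rewrite /= !inordK //; lia.
Qed.

Definition edges : seq (edge_t o) := enum {: edge_t o}.

Lemma mem_edges e : e \in edges.
Proof. exact: mem_enum. Qed.

Lemma size_edges : size edges = num_edges o.
Proof. by rewrite -cardE card_sig. Qed.

Lemma size_enum_paths : size (enum {: edge_t o * 'I_8}) = 8 * num_edges o.
Proof. by rewrite -cardE card_prod card_ord card_sig mulnC. Qed.

Hypothesis path_forbidding : forall e k, forbidding (path_list e k) (pa k) (pb k).

Lemma reach_prepare_path g e k x y : Lcol g ->
  x \in Glist Lint (pstart e k) -> y \in Glist Lint (pend e k) ->
  (x <> pa k \/ y <> pb k) -> (x = g (pstart e k) \/ y = g (pend e k)) ->
  exists2 h, reachG (same_skeleton g) 7 g (with_path g e k h) &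
    [/\ h pu = g (pstart e k), h pv = g (pend e k) &
        is_Lcol padj (path_list e k) (set_ends h x y)].
Proof.
move=> Lg Hx Hy Had Hor.
have Lg_ek : is_Lcol padj (path_list e k) (path_col g e k).
  by case/Lcol_skeleton_paths: Lg.
have [h Rh Lh] := forbidding_prepare (path_forbidding e k) Lg_ek Hx Hy Had Hor.
have [Hu Hv] := reach_inv_end Rh.
exists h => //.
have := reach_map (F := with_path g e k) _ _ Rh; rewrite with_path_col; apply.
  move=> c [cu cv] Lc; split; first exact: Lcol_with_path.
  exact: with_path_skeleton.
by move=> c d [cu cv] [du dv]; apply: step_with_path.
Qed.

Lemma reach_prepare_paths T (ps : seq (edge_t o * 'I_8)) g : Lcol g ->
  (forall x, ~~ inner x -> T x \in Glist Lint x) ->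
  (forall e k, T (pstart e k) <> pa k \/ T (pend e k) <> pb k) ->
  (forall e k, T (pstart e k) = g (pstart e k) \/ T (pend e k) = g (pend e k)) ->
  exists g', [/\ reachG (same_skeleton g) (7 * size ps) g g',
    forall e k, (e, k) \notin ps -> path_col g' e k = path_col g e k &
    forall e k, (e, k) \in ps -> is_Lcol padj (path_list e k)
      (set_ends (path_col g' e k) (T (pstart e k)) (T (pend e k)))].
Proof.
elim: ps g => [|[e k] ps IH] g Lg LT adm keep.
  by exists g; split=> //; apply: reach_refl.
have [h Rh [Hu Hv Lh]] := reach_prepare_path Lg (LT _ (negbT (inner_pstart e k)))
  (LT _ (negbT (inner_pend e k))) (adm e k) (keep e k).
set g1 := with_path g e k h in Rh.
have S1 := reach_inv_end Rh.
have [|g' [R2 N2 I2]] := IH g1 (reach_Lcol Rh) LT adm.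
  by move=> e' k'; rewrite !S1 ?inner_pstart ?inner_pend.
exists g'; split.
- rewrite mulnS; apply: reach_trans Rh (reach_weaken _ R2).
  by move=> c Hc w Hw; rewrite Hc // S1.
- move=> e' k'; rewrite in_cons negb_or => /andP [Hne Hn].
  by rewrite N2 // path_col_with_path_other.
- move=> e' k'; rewrite in_cons; case: (boolP ((e', k') \in ps)) => [Hin _|]; first exact: I2.
  rewrite orbF => Hn /eqP [Ee Ek]; subst e' k'.
  by rewrite N2 // /g1 path_col_with_path.
Qed.

(* One round: prepare all paths for the skeleton coloring T, then move the
   skeleton vertices of ws to T one by one. *)
Lemma reach_recolor_skeleton g T (ws : seq (vtx o)) : Lcol g -> skeleton_proper T ->
  (forall w, ~~ inner w -> w \notin ws -> T w = g w) ->
  (forall x y, adj0 x y -> ~~ inner x -> ~~ inner y -> T x = g x \/ T y = g y) ->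
  (forall e k, T (pstart e k) = g (pstart e k) \/ T (pend e k) = g (pend e k)) ->
  (forall e k, T (pstart e k) <> pa k \/ T (pend e k) <> pb k) ->
  exists2 g', reachG (fun c => forall w, ~~ inner w -> w \notin ws -> c w = g w)
                     (56 * num_edges o + size ws) g g'
            & same_skeleton T g'.
Proof.
move=> Lg PT Tws Tadj Tkeep Tadm.
have [TL _ _ _ _] := PT.
have [gs [Rs _ Is]] := reach_prepare_paths (enum {: edge_t o * 'I_8}) Lg TL Tadm Tkeep.
have Ss := reach_inv_end Rs.
pose g' w := if inner w then gs w else T w.
have Lg' : Lcol g'.
  apply/Lcol_skeleton_paths; split.
    by apply: skeleton_proper_ext PT => x /negbTE Hx; rewrite /g' Hx.
  move=> e k.
  have -> : path_col g' e k = set_ends (path_col gs e k) (T (pstart e k)) (T (pend e k)).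
    apply: functional_extensionality => i; rewrite /path_col /set_ends /pathv.
    case: eqP => _; first by rewrite /g' inner_pstart.
    by case: eqP => _; first by rewrite /g' inner_pend.
  by apply: Is; rewrite mem_enum.
have R2 : reachG (fun c => forall w, w \notin ws -> c w = gs w) (size ws) gs g'.
  apply: reach_recolor_seq (reach_Lcol Rs) Lg' _ _ => [w Hw|x y Hxy]; rewrite /g'.
    by case: ifP => // /negbT Hi; rewrite Ss // Tws.
  case: ifP => Hx; first by left.
  case: ifP => Hy; first by right.
  rewrite !Ss ?Hx ?Hy //.
  by case: Hxy => /Tadj; rewrite ?Hx ?Hy => /(_ isT isT) [] ->; by [left|right].
exists g'; last by move=> w /negbTE Hw; rewrite /g' Hw.
have -> : 56 * num_edges o = 7 * size (enum {: edge_t o * 'I_8}).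
  by rewrite size_enum_paths mulnA.
apply: reach_trans (reach_weaken _ Rs) (reach_weaken _ R2) => c Hc w Hw.
  by rewrite Hc.
by move=> Hws; rewrite Hc // Ss.
Qed.

Definition set_abc c (a b cc : nat) : vtx o -> nat := fun x =>
  match x with VA => a | VB => b | VC => cc | _ => c x end.

Definition abc_ok (a b cc : nat) : bool :=
  [&& a \in [:: 1; 2; 3], b \in [:: 1; 2], cc \in [:: 3; 4], a != b, a != cc, a != 4 & b != cc].

Lemma path_col_set_abc c a b cc e k : path_col (set_abc c a b cc) e k = path_col c e k.
Proof.
apply: functional_extensionality => i; rewrite /path_col.
by have := pathv_abcd e k i; case: (pathv e k i).
Qed.

Lemma Lcol_set_abc c a b cc : Lcol c -> c VD = 4 -> abc_ok a b cc ->
  (forall e, c (VZ e) != cc) -> Lcol (set_abc c a b cc).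
Proof.
move=> Lc cD /and5P [Ha Hb Hc Hab /and3P [Hac Ha4 Hbc]] Hz.
have /Lcol_skeleton_paths [[cL cux cuy _ _] _] := Lc.
apply/Lcol_skeleton_paths; split; last first.
  by move=> e k; rewrite path_col_set_abc; case/Lcol_skeleton_paths: Lc => _; apply.
split=> //= [|e|]; first by case=> [u|e|e|e|e k j| | | |] //= _; rewrite ?cD //; apply: cL.
  by apply/eqP.
rewrite cD Hab Hac Ha4 Hbc /=.
by move: Hb; rewrite !inE => /orP [] /eqP ->.
Qed.

Section Rounds.
Variable al : vtx o -> nat.
Hypothesis al_spec : alpha_spec Lint al.
Variable f : 'I_n -> 'I_3.
Hypothesis f_proper : forall u v, o u v || o v u -> f u != f v.

(* Isolated vertices keep their color 1, so that a round recolors only O(m)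
   vertices. *)
Definition phi u : nat := if [exists v, o u v || o v u] then (f u).+1 else 1.

Lemma phi_in u : phi u \in [:: 1; 2; 3].
Proof.
rewrite /phi; case: ifP => // _; have := ltn_ord (f u).
by case: (nat_of_ord (f u)) => [|[|[|]]].
Qed.

Lemma phi_edge e : phi (sval e).1 != phi (sval e).2.
Proof.
case: e => [[u v] /= H].
have E1 : phi u = (f u).+1 by rewrite /phi; case: existsP => // -[]; exists v; rewrite H.
have E2 : phi v = (f v).+1.
  by rewrite /phi; case: existsP => // -[]; exists u; rewrite H orbT.
by rewrite E1 E2 eqSS; apply: f_proper; rewrite H.
Qed.

(* The colors of x_uv, y_uv and z_uv once u has color p: they avoid the
   forbidden pairs of all paths at these vertices whatever color different from
   p the vertex v has, and z_col p is never 4. *)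
Definition x_col p := if p == 1 then 4 else if p == 2 then 1 else 2.
Definition y_col p := if p == 1 then 3 else 4.
Definition z_col p := if p == 1 then 2 else 1.

(* The skeleton coloring after round s; interior values are never used. *)
Definition stage (s : nat) (w : vtx o) : nat :=
  match w with
  | VOrig u => if 0 < s then phi u else 1
  | VX e => if 1 < s then x_col (phi (sval e).1) else 4
  | VY e => if 1 < s then y_col (phi (sval e).1) else 4
  | VZ e => if 2 < s then z_col (phi (sval e).1) else 4
  | VInt _ _ _ => 0
  | VA => 1 | VB => 2 | VC => 3 | VD => 4
  end.

Definition stage_changes (s : nat) : seq (vtx o) :=
  match s with
  | 0 => [seq VOrig (sval e).1 | e <- edges] ++
         [seq VOrig (sval e).2 | e <- edges]
  | 1 => [seq VX e | e <- edges] ++ [seq VY e | e <- edges]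
  | 2 => [seq VZ e | e <- edges]
  | _ => [::]
  end.

Definition fixes_abcd c : Prop := [/\ c VA = 1, c VB = 2, c VC = 3 & c VD = 4].

Ltac phi_cases e := move: (phi_in (sval e).1) (phi_in (sval e).2) (phi_edge e);
  case: (phi (sval e).1) => [|[|[|[|?]]]] //; case: (phi (sval e).2) => [|[|[|[|?]]]] //.

Ltac kind_cases :=
  case=> [[|[|[|[|[|[|[|[|?]]]]]]]] ?] //; rewrite /pstart /pend /pa /pb /=.

Lemma stage_proper s : skeleton_proper (stage s).
Proof.
split=> [x|e|e|e|] /=; last by [].
- by case: x => [u|e|e|e|e k j| | | |] //= _; case: ifP => // _;
    rewrite ?phi_in // /x_col /y_col /z_col; repeat case: ifP.
- by case: s => [|[|s]] /=; phi_cases e.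
- by case: s => [|[|s]] /=; phi_cases e.
- by case: s => [|[|[|s]]] /=; phi_cases e.
Qed.

Lemma stage_changes_spec s w : ~~ inner w -> w \notin stage_changes s ->
  stage s.+1 w = stage s w.
Proof.
case: w => [u|e|e|e|e k j| | | |] // _; case: s => [|[|[|s]]] //=; rewrite ?mem_cat.
- move=> Hu; rewrite /phi; case: existsP => // -[v Huv]; case/norP: Hu.
  by case/orP: Huv => H; [move=> /mapP [] | move=> _ /mapP []];
    exists (exist _ (_, _) H); rewrite ?mem_edges.
- by rewrite map_f ?mem_edges.
- by rewrite orbC map_f ?mem_edges.
- by rewrite map_f ?mem_edges.
Qed.

Lemma abcd_notin_stage_changes s :
  [/\ VA \notin stage_changes s, VB \notin stage_changes s,
      VC \notin stage_changes s & VD \notin stage_changes s].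
Proof.
by case: s => [|[|[|s]]] //=; rewrite ?mem_cat; split; apply/negP;
  try case/orP; case/mapP.
Qed.

Lemma stage_adj s x y : adj0 x y -> ~~ inner x -> ~~ inner y ->
  stage s.+1 x = stage s x \/ stage s.+1 y = stage s y.
Proof.
case=> [e|e|e k i j Hij|e| | | | |]; try by left.
- by case: s; [right | left].
- by case: s; [right | left].
- by rewrite !inner_pathv !negb_and !negbK => /orP [] /eqP ? /orP [] /eqP ?; lia.
- by right.
Qed.

Lemma stage_path_keep s e k :
  stage s.+1 (pstart e k) = stage s (pstart e k) \/ stage s.+1 (pend e k) = stage s (pend e k).
Proof. by move: k; case: s => [|[|s]]; kind_cases; by [left | right]. Qed.

Lemma stage_path_admissible s e k :
  stage s (pstart e k) <> pa k \/ stage s (pend e k) <> pb k.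
Proof.
by move: k; case: s => [|[|[|s]]]; kind_cases; phi_cases e;
  rewrite /x_col /y_col /z_col /=; by [left | right].
Qed.

Lemma size_stage_changes s : size (stage_changes s) <= 2 * num_edges o.
Proof.
by case: s => [|[|[|s]]]; rewrite /stage_changes ?size_cat ?(size_map _ edges) ?size_edges /=; lia.
Qed.

Lemma al_stage0 : same_skeleton (stage 0) al.
Proof. by case: al_spec => HO HXYZ [HA HB HC HD] _; case=> //= e _; case: (HXYZ e). Qed.

Lemma reach_stage s :
  exists2 g, reachG fixes_abcd (58 * num_edges o * s) al g & same_skeleton (stage s) g.
Proof.
elim: s => [|s [g Rg Sg]].
  exists al; last exact: al_stage0.
  by case: al_spec => _ _ Habcd Lal; rewrite muln0; apply: reach_refl.
have [||| g' R' S'] := reach_recolor_skeleton (ws := stage_changes s) (reach_Lcol Rg)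
  (stage_proper s.+1) _ _ _ (stage_path_admissible s.+1).
- by move=> w Hw Hn; rewrite stage_changes_spec // Sg.
- by move=> x y Hxy Hx Hy; rewrite !Sg //; apply: stage_adj.
- by move=> e k; rewrite !Sg ?inner_pstart ?inner_pend //; apply: stage_path_keep.
exists g' => //.
have Hk : 56 * num_edges o + size (stage_changes s) <= 58 * num_edges o.
  by have := size_stage_changes s; lia.
rewrite mulnS addnC; apply: reach_trans Rg (reach_leq Hk (reach_weaken _ R')) => c Hc.
have [nA nB nC nD] := abcd_notin_stage_changes s.
by split; rewrite Hc // Sg.
Qed.

Lemma Lcol_beta c : fixes_abcd c -> Lcol c -> Lcol (beta_of c).
Proof.
move=> [cA cB cC cD] Lc.
have -> : beta_of c = set_abc c 2 1 3 by apply: functional_extensionality; case.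
apply: Lcol_set_abc => // e; rewrite -cC; apply/eqP; apply: (proj2 Lc); left.
exact: adj_zc.
Qed.

Lemma step_beta c d : fixes_abcd c -> fixes_abcd d -> step_ok c d ->
  step_ok (beta_of c) (beta_of d).
Proof.
move=> [cA cB _ _] [dA dB _ _] [Hid|[w [Hw Ho]]]; first by left; case=> //=.
right; exists w; split; first by move: Hw; case: w Ho => //= _; rewrite ?cA ?dA ?cB ?dB.
by case=> //= *; apply: Ho.
Qed.

(* Exchange the colors of a and b via (a,b,c) = (1,2,3), (1,2,4), (3,2,4),
   (3,1,4), (2,1,4), (2,1,3); c may take color 4 because no z_uv has it. *)
Lemma reach_swap_ab g : Lcol g -> g VD = 4 -> (forall e, g (VZ e) \in [:: 1; 2]) ->
  reachG (fun _ => True) 5 (set_abc g 1 2 3) (set_abc g 2 1 3).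
Proof.
move=> Lg gD gZ.
have gZ_neq cc : cc \in [:: 3; 4] -> forall e, g (VZ e) != cc.
  by move=> Hc e; move: (gZ e) Hc; rewrite !inE => /orP [] /eqP -> /orP [] /eqP ->.
have move1 a b cc a' b' cc' : abc_ok a b cc -> abc_ok a' b' cc' ->
    step_ok (set_abc g a b cc) (set_abc g a' b' cc') ->
    reachG (fun _ => True) 1 (set_abc g a b cc) (set_abc g a' b' cc').
  move=> ok ok' Hs; apply: reach1 => //; apply: Lcol_set_abc => //; apply: gZ_neq.
    by case/and5P: ok.
  by case/and5P: ok'.
apply: (@reach_trans _ _ _ _ 1 4 _ (set_abc g 1 2 4)).
  by apply: move1 => //; right; exists VC; split=> //; case.
apply: (@reach_trans _ _ _ _ 1 3 _ (set_abc g 3 2 4)).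
  by apply: move1 => //; right; exists VA; split=> //; case.
apply: (@reach_trans _ _ _ _ 1 2 _ (set_abc g 3 1 4)).
  by apply: move1 => //; right; exists VB; split=> //; case.
apply: (@reach_trans _ _ _ _ 1 1 _ (set_abc g 2 1 4)).
  by apply: move1 => //; right; exists VA; split=> //; case.
by apply: move1 => //; right; exists VC; split=> //; case.
Qed.

Lemma reach_alpha_beta :
  reachG (fun _ => True) (348 * num_edges o + 5) al (beta_of al).
Proof.
have [g Rg Sg] := reach_stage 3.
have [gA gB gC gD] := reach_inv_end Rg.
have Rswap : reachG (fun _ => True) 5 g (beta_of g).
  have -> : beta_of g = set_abc g 2 1 3 by apply: functional_extensionality; case.
  rewrite {1}(_ : g = set_abc g 1 2 3); last by apply: functional_extensionality; case.
  apply: reach_swap_ab (reach_Lcol Rg) gD _ => e.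
  by rewrite Sg //= /z_col; case: ifP.
have Rback : reachG (fun _ => True) (58 * num_edges o * 3) (beta_of g) (beta_of al).
  apply: reach_sym; apply: reach_map Rg => [c Hc Lc|]; last exact: step_beta.
  by split; first exact: Lcol_beta.
have R := reach_trans (reach_trans (reach_weaken (fun _ _ => I) Rg) Rswap) Rback.
by apply: reach_leq R; lia.
Qed.

End Rounds.

End Skeleton.

Theorem mainTheorem7 :
  exists c : nat,
  forall (n : nat) (o : rel 'I_n),
    (forall u, ~~ o u u) ->
    (forall u v, o u v -> ~~ o v u) ->
    forall Lint : edge_t o -> 'I_8 -> 'I_5 -> seq nat,
    (forall e k i, all (fun col => 1 <= col <= 4) (Lint e k i)) ->
    (forall e k, forbidding (fun i => Glist Lint (pathv e k i)) (pa k) (pb k)) ->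
    forall al : vtx o -> nat,
    alpha_spec Lint al ->
    three_colorable o ->
    exists (len : nat) (s : nat -> vtx o -> nat),
      [/\ recol_seq (@Gadj n o) (Glist Lint) s len,
          (forall x, s 0 x = al x),
          (forall x, s len x = beta_of al x) &
          len <= c * (num_edges o + 1)].
Proof.
exists 348 => n o _ _ Lint _ forb al al_spec [f f_proper].
have [s [Hs s0 slen _]] := reach_alpha_beta forb al_spec f_proper.
exists (348 * num_edges o + 5), s; split=> //; [by rewrite s0 | by rewrite slen | lia].
Qed.
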